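(* For all $v,w,u\in W$, \[ \pi\bullet\big(\zeta(v)_{I_w}\cdot(\delta_v\odot\zeta^\vee_{I_u})\big)=\delta^{Kr}_{w,u}\,\mathbf 1, \] i.e. $\delta_v\odot\zeta^\vee_{I_w}$ is the Poincaré dual $\zeta(v)^\vee_{I_w}$ of $\zeta(v)_{I_w}$; in particular, for each fixed $v\in W$ the classes $\{\delta_v\odot\zeta^\vee_{I_w}\}_{w\in W}$ form an $S$-basis of $Z$.
   Context: Let $\Phi$ be a finite real root system with simple roots $\Pi$, positive roots $\Phi_+$, negative roots $\Phi_-$, and finite Coxeter group $W$. Let $\mathcal O$ be its coefficient ring, $\Lambda$ a free $\mathcal O$-module between the root lattice $\Lambda_r$ (the $\mathcal O$-span of $\Pi$) and the weight lattice $\Lambda_w=\{\lambda\in\Lambda_r\otimes K:\alpha^\vee(\lambda)\in\mathcal O\ \forall\alpha\}$. Let $F$ be a one-dimensional commutative formal group law over a commutative ring $R$, and $S$ the associated formal group ring ($R[[x_\lambda]]_{\lambda\in\Lambda}$ modulo the closure of the relations $x_0=0$, $x_{\lambda+\mu}=F(x_\lambda,x_\mu)$; no completion for polynomial $F$; in the non-crystallographic case $F$ additive, $R=\mathcal O$, $S=\mathrm{Sym}_{\mathcal O}(\Lambda)$), with $W$ acting via $w(x_\lambda)=x_{w(\lambda)}$. Assume all $x_\alpha$ regular and that for distinct positive roots $\alpha,\alpha'$, $x_\alpha\mid x_{\alpha'}f\Rightarrow x_\alpha\mid f$. $Q=S[1/x_\alpha]$, $Q_W$ the twisted group algebra with basis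 $\delta_w$ and $\delta_wq=w(q)\delta_w$; $Y_\alpha=\frac1{x_{-\alpha}}+\frac1{x_\alpha}\delta_{s_\alpha}$, $Y_i=Y_{\alpha_i}$. For each $w$ fix a reduced word $I_w=(i_1,\dots,i_l)$, $Y_{I_w}=Y_{i_1}\cdots Y_{i_l}$, $I_w^{-1}$ the reversed word. The Demazure algebra $\mathbb D\subset Q_W$ is the $R$-subalgebra generated by $S$ and the $Y_i$; it is a free left $S$-module with basis $\{Y_{I_w}\}$. Structure algebra $Z=\{(z_v)_{v\in W}\in\bigoplus_vS: z_{s_\alpha w}-z_w\in x_\alpha S\ \forall w,\ \alpha\in\Phi_+\}$ (coordinatewise product). It is known that $Z$ is the image of the injective map $\mathrm{Hom}_S(\mathbb D,S)\to\bigoplus_vS$, $\phi\mapsto(\phi(\delta_v))_v$. Hecke action $q\delta_w\bullet(z_v)_v=(v(q)z_{vw})_v$; Weyl action $q\delta_w\odot(z_v)_v=(q\,w(z_{w^{-1}v}))_v$. $\mathbf 1=(1)_v$; $x_\Pi=\prod_{\alpha\in\Phi_-}x_\alpha$; $[e]$ has $e$-coordinate $x_\Pi$ and other coordinates $0$; $[v]=\delta_v\odot[e]$; $\zeta(v)_{I_w}=Y_{I_w^{-1}}\bullet[v]$, $\zeta_{I_w}=\zeta(e)_{I_w}$. $\pi=\sum_w\frac1{w(x_\Pi)}\delta_w$ acting by $\bullet$. $\zeta^\vee_{I_w}\in Z$ is the element corresponding to the $S$-linear functional on $\mathbb D$ with $Y_{I_u}\mapsto\delta^{Kr}_{w,u}$;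 it is known that $\{\zeta^\vee_{I_w}\}$ is an $S$-basis of $Z$ and $\pi\bullet(\zeta_{I_w}\cdot\zeta^\vee_{I_u})=\delta^{Kr}_{w,u}\mathbf 1$. *)

From HB Require Import structures.
From mathcomp Require Import all_boot all_order all_algebra all_fingroup.
Set Implicit Arguments. Unset Strict Implicit. Unset Printing Implicit Defensive.
Import GRing.Theory.
Local Open Scope ring_scope.

Definition wprod (gT : finGroupType) (n : nat) (s : 'I_n -> gT) (I : seq 'I_n) : gT :=
  foldr (fun i g => (s i * g)%g) 1%g I.

Record setting := Setting {
  W : finGroupType;                     (* the finite Coxeter group *)
  S : comNzRingType;                    (* the formal group ring *)
  Q : comUnitRingType;
  iota : {rmorphism S -> Q};
  actS : W -> S -> S;
  actQ : W -> Q -> Q;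
  rt : finType;
  ract : W -> rt -> rt;
  rneg : rt -> rt;
  pos : pred rt;
  refl : rt -> W;
  xr : rt -> S;
  rank : nat;
  simple : 'I_rank -> rt;
  actS1 : forall a, actS (1%g) a = a;
  actSM : forall g h a, actS ((g * h)%g) a = actS g (actS h a);
  actS_add : forall g a b, actS g (a + b) = actS g a + actS g b;
  actS_mul : forall g a b, actS g (a * b) = actS g a * actS g b;
  actS_one : forall g, actS g 1 = 1;
  actQ1 : forall a, actQ (1%g) a = a;
  actQM : forall g h a, actQ ((g * h)%g) a = actQ g (actQ h a);
  actQ_add : forall g a b, actQ g (a + b) = actQ g a + actQ g b;
  actQ_mul : forall g a b, actQ g (a * b) = actQ g a * actQ g b;
  actQ_one : forall g, actQ g 1 = 1;
  actQ_iota : forall g a, actQ g (iota a) = iota (actS g a);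
  iota_inj : injective iota;
  ract1 : forall a, ract (1%g) a = a;
  ractM : forall g h a, ract ((g * h)%g) a = ract g (ract h a);
  rnegK : forall a, rneg (rneg a) = a;
  pos_rneg : forall a, pos (rneg a) = ~~ pos a;
  ract_rneg : forall g a, ract g (rneg a) = rneg (ract g a);
  refl_rneg : forall a, refl (rneg a) = refl a;
  refl_ract : forall g a, refl (ract g a) = (g * refl a * g^-1)%g;
  ract_refl : forall a, ract (refl a) a = rneg a;
  refl_invol : forall a, (refl a * refl a)%g = 1%g;
  refl_neq1 : forall a, refl a != 1%g;
  simple_pos : forall i, pos (simple i);
  W_gen : forall w, exists I, wprod (fun i => refl (simple i)) I = w;
  act_xr : forall g a, actS g (xr a) = xr (ract g a);
  xr_rneg : forall a, exists u v, u * v = 1 /\ xr (rneg a) = xr a * u;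
  xr_reg : forall a f, xr a * f = 0 -> f = 0;
  xr_div : forall a b f, pos a -> pos b -> a != b ->
             (exists t, xr b * f = xr a * t) -> exists t, f = xr a * t;
  (* Q is the localization S[1/x_alpha] *)
  xr_unit : forall a, iota (xr a) \is a GRing.unit;
  Q_loc : forall q, exists (s : S) (k : nat),
             q * iota (\prod_(a | ~~ pos a) xr a) ^+ k = iota s
}.

Arguments iota {s}.
Arguments actS {s}.
Arguments actQ {s}.
Arguments ract {s}.
Arguments rneg {s}.
Arguments pos {s}.
Arguments refl {s}.
Arguments xr {s}.
Arguments simple {s}.

Section Defs.
Variable st : setting.
Local Notation W := (W st).
Local Notation S := (S st).
Local Notation Q := (Q st).
Local Notation n := (rank st).

Definition sref (i : 'I_n) : W := refl (simple i).

Definition reduced_word (I : seq 'I_n) (w : W) : Prop :=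
  wprod sref I = w /\ forall I', wprod sref I' = w -> (size I <= size I')%N.

(* Elements of Q_W: sum_w X(w) delta_w, represented by coefficient functions. *)
Definition qw_mul (X Y : W -> Q) : W -> Q :=
  fun g => \sum_(x : W) X x * actQ x (Y ((x^-1 * g)%g)).
Definition qw_one : W -> Q := fun g => (g == 1%g)%:R.
Definition qw_delta (v : W) : W -> Q := fun g => (g == v)%:R.

Definition Yi (i : 'I_n) : W -> Q :=
  fun g => (g == 1%g)%:R / iota (xr (rneg (simple i)))
         + (g == sref i)%:R / iota (xr (simple i)).

Definition Yword (I : seq 'I_n) : W -> Q := foldr (fun i acc => qw_mul (Yi i) acc) qw_one I.

(* Hecke action  (q delta_w) . (z_v)_v = (v(q) z_{vw})_v, extended additively *)
Definition hecke (X : W -> Q) (z : W -> Q) : W -> Q :=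
  fun v => \sum_(w : W) actQ v (X w) * z ((v * w)%g).

(* Weyl action  (q delta_w) (.) (z_v)_v = (q w(z_{w^{-1} v}))_v, on Q-valued families *)
Definition weylQ (X : W -> Q) (z : W -> Q) : W -> Q :=
  fun v => \sum_(w : W) X w * actQ w (z ((w^-1 * v)%g)).

Definition odotS (v : W) (z : W -> S) : W -> S :=
  fun u => actS v (z ((v^-1 * u)%g)).

Definition xPi : S := \prod_(a | ~~ pos a) xr a.

Definition bre : W -> Q := fun u => (u == 1%g)%:R * iota xPi.
Definition brv (v : W) : W -> Q := weylQ (qw_delta v) bre.

(* zeta(v)_{I_w} = Y_{I_w^{-1}} . [v] *)
Definition zeta (I : W -> seq 'I_n) (v w : W) : W -> Q := hecke (Yword (rev (I w))) (brv v).

Definition piQ : W -> Q := fun w => (actQ w (iota xPi))^-1.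

Definition fmul (a b : W -> Q) : W -> Q := fun v => a v * b v.
Definition liftQ (z : W -> S) : W -> Q := fun v => iota (z v).

Definition inZ (z : W -> S) : Prop :=
  forall (w : W) (a : rt st), pos a ->
    exists s : S, z ((refl a * w)%g) - z w = xr a * s.

(* b is an S-basis of Z (S acting diagonally) *)
Definition is_Sbasis (b : W -> W -> S) : Prop :=
  (forall w, inZ (b w)) /\
  forall z, inZ z -> exists! c : W -> S, forall v, z v = \sum_(w : W) c w * b w v.

(* z = zeta^vee_{I_w}: the image (phi(delta_v))_v of the S-linear functional
   phi on D with phi(Y_{I_u}) = delta_{w,u}, phi extended Q-linearly to Q_W. *)
Definition dual_char (I : W -> seq 'I_n) (w : W) (z : W -> S) : Prop :=
  forall u : W, \sum_(v : W) Yword (I u) v * iota (z v) = (u == w)%:R.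

End Defs.

From Pilot Require Import Defs.
From HB Require Import structures.
From mathcomp Require Import all_boot all_order all_algebra all_fingroup.
From Stdlib Require Import FunctionalExtensionality.
Import GRing.Theory.
Local Open Scope ring_scope.

(* The Weyl action delta_v (.) moves the index of a family (z_u)_u on the
   left and applies v, while the Hecke action moves it on the right; hence
   the two actions commute, and delta_v (.) is multiplicative for the
   coordinatewise product.  As zeta(v)_{I_w} = delta_v (.) zeta_{I_w},
   applying delta_v (.) to the known duality between zeta_{I_w} and
   zeta^vee_{I_u} gives the first claim.  For the second, delta_v (.) is a
   v-semilinear bijection of Z with inverse delta_{v^-1} (.), so it maps an
   S-basis to an S-basis. *)

Section WeylAction.
Variable st : setting.
Local Notation W := (W st).
Local Notation S := (S st).
Local Notation Q := (Q st).

Section RingAutomorphisms.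
Variable g : W.

Lemma actS0 : actS g 0 = 0 :> S.
Proof. by apply: (@addrI _ (actS g 0)); rewrite -actS_add !addr0. Qed.

Lemma actQ0 : actQ g 0 = 0 :> Q.
Proof. by apply: (@addrI _ (actQ g 0)); rewrite -actQ_add !addr0. Qed.

HB.instance Definition _ :=
  GRing.isNmodMorphism.Build S S (actS g) (actS0, actS_add g).
HB.instance Definition _ :=
  GRing.isMonoidMorphism.Build S S (actS g) (actS_one g, actS_mul g).
HB.instance Definition _ :=
  GRing.isNmodMorphism.Build Q Q (actQ g) (actQ0, actQ_add g).
HB.instance Definition _ :=
  GRing.isMonoidMorphism.Build Q Q (actQ g) (actQ_one g, actQ_mul g).

End RingAutomorphisms.

Lemma actSK (v : W) : cancel (actS v) (actS (v^-1)%g).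
Proof. by move=> a; rewrite -actSM mulVg actS1. Qed.

Lemma actSKV (v : W) : cancel (actS (v^-1)%g) (actS v).
Proof. by move=> a; rewrite -actSM mulgV actS1. Qed.

Lemma weylQ_delta (v : W) (z : W -> Q) (y : W) :
  weylQ (qw_delta v) z y = actQ v (z (v^-1 * y)%g).
Proof.
rewrite /weylQ (bigD1 v) //= big1 ?addr0 => [|u /negbTE neq_uv].
  by rewrite /qw_delta eqxx mul1r.
by rewrite /qw_delta neq_uv mul0r.
Qed.

Lemma weylQ_delta1 (z : W -> Q) : weylQ (qw_delta 1%g) z =1 z.
Proof. by move=> y; rewrite weylQ_delta invg1 mul1g actQ1. Qed.

Lemma weylQ_delta_fmul (v : W) (a b : W -> Q) :
  weylQ (qw_delta v) (fmul a b)
  =1 fmul (weylQ (qw_delta v) a) (weylQ (qw_delta v) b).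
Proof. by move=> y; rewrite /fmul !weylQ_delta rmorphM. Qed.

Lemma hecke_eq (X z1 z2 : W -> Q) : z1 =1 z2 -> hecke X z1 =1 hecke X z2.
Proof. by move=> eq_z y; apply: eq_bigr => w _; rewrite eq_z. Qed.

Lemma hecke_weylQ (X Y z : W -> Q) :
  hecke X (weylQ Y z) =1 weylQ Y (hecke X z).
Proof.
move=> v; rewrite /hecke /weylQ.
under eq_bigr do rewrite mulr_sumr.
rewrite exchange_big; apply: eq_bigr => u _.
rewrite rmorph_sum mulr_sumr; apply: eq_bigr => w _.
by rewrite rmorphM /= -actQM mulKVg mulrCA mulgA.
Qed.

Lemma zeta_weylQ (I : W -> seq 'I_(rank st)) (v w : W) :
  zeta I v w =1 weylQ (qw_delta v) (zeta I 1%g w).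
Proof.
move=> y; rewrite /zeta /brv hecke_weylQ !weylQ_delta; congr (actQ v _).
by apply: hecke_eq => t; rewrite weylQ_delta1.
Qed.

(* x_{-a} is a unit multiple of x_a, so the divisibility conditions of Z
   hold for negative roots as well. *)
Lemma inZ_root {z : W -> S} : inZ z ->
  forall (w : W) (a : rt st), exists s, z (refl a * w)%g - z w = xr a * s.
Proof.
move=> zZ w a; case pos_a: (pos a); first exact: zZ.
have [|s eq_s] := zZ w (rneg a); first by rewrite pos_rneg pos_a.
have [u [_ [_ xr_na]]] := xr_rneg a.
by exists (u * s); rewrite -refl_rneg eq_s xr_na mulrA.
Qed.

Lemma inZ_odotS (v : W) {z : W -> S} : inZ z -> inZ (odotS v z).
Proof.
move=> zZ w a _; set b := Defs.ract (v^-1)%g a.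
have [s eq_s] := inZ_root zZ (v^-1 * w)%g b.
exists (actS v s); rewrite /odotS.
have -> : (v^-1 * (refl a * w) = refl b * (v^-1 * w))%g.
  by rewrite refl_ract invgK !mulgA mulgK.
by rewrite -rmorphB eq_s rmorphM /= act_xr -ractM mulgV ract1.
Qed.

Lemma is_Sbasis_odotS (v : W) (b : W -> W -> S) :
  is_Sbasis b -> is_Sbasis (fun w => odotS v (b w)).
Proof.
case=> bZ b_uniq; split=> [w | z zZ]; first exact: inZ_odotS.
have [c [dec_c c_uniq]] := b_uniq _ (inZ_odotS (v^-1)%g zZ).
exists (actS v \o c); split=> [y | c' dec_c'].
  have := dec_c (v^-1 * y)%g; rewrite /odotS invgK mulKVg => dec_y.
  rewrite -[z y](actSKV v) dec_y rmorph_sum; apply: eq_bigr => w _.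
  by rewrite rmorphM.
apply: functional_extensionality => w.
rewrite (c_uniq (actS (v^-1)%g \o c')) /= ?actSKV // => y.
rewrite /odotS invgK dec_c' rmorph_sum; apply: eq_bigr => t _.
by rewrite rmorphM /odotS /= actSK mulKg.
Qed.

End WeylAction.

Theorem lemma3p6 (st : setting)
  (I : W st -> seq 'I_(rank st))
  (hI : forall w, reduced_word (I w) w)
  (zv : W st -> W st -> S st)
  (hzv : forall w, dual_char I w (zv w))
  (* known: {zeta^vee_{I_w}}_w is an S-basis of Z *)
  (known_basis : is_Sbasis zv)
  (* known: pi . (zeta_{I_w} . zeta^vee_{I_u}) = delta_{w,u} 1 *)
  (known_dual : forall w u x,
      hecke (@piQ st) (fmul (zeta I 1%g w) (liftQ (zv u))) x = (w == u)%:R :> Q st) :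
  (forall v w u x,
      hecke (@piQ st) (fmul (zeta I v w) (weylQ (qw_delta v) (liftQ (zv u)))) x
      = (w == u)%:R :> Q st)
  /\ (forall v, is_Sbasis (fun w => odotS v (zv w))).
Proof.
split=> [v w u x | v]; last exact: is_Sbasis_odotS.
rewrite -(rmorph_nat (actQ v)) /= -(known_dual w u (v^-1 * x)%g) -weylQ_delta.
rewrite -hecke_weylQ; apply: hecke_eq => y.
by rewrite weylQ_delta_fmul /fmul zeta_weylQ.
Qed.
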